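(* Let $G$ be a compact group and $\{U_g\}_{g\in G}$ a unitary representation of $G$ on $\mathbb{C}^{d_Ad_B}$ which decomposes into $k$ pairwise inequivalent irreducible representations with multiplicities $\{m_i\}_{i=1}^k$. If $\rho_{A^nB^n}$ is a positive semidefinite operator on $(\mathbb{C}^{d_Ad_B})^{\otimes n}$ that is permutation-invariant and IID-$G$-invariant, then there exists a purification $|\Psi\rangle\in(\mathbb{C}^{d_Ad_B}\otimes\mathbb{C}^{d_Ad_B})^{\otimes n}$ of $\rho_{A^nB^n}$ supported on $\mathrm{Sym}^n(W)$ for a subspace $W\subseteq\mathbb{C}^{d_Ad_B}\otimes\mathbb{C}^{d_Ad_B}$ isomorphic to $\bigoplus_{i=1}^k\mathbb{C}^{m_i}\otimes\mathbb{C}^{m_i}$ (so $\dim W=\sum_{i=1}^k m_i^2$).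
   Context: $\rho$ on $(\mathbb{C}^{d_Ad_B})^{\otimes n}$ is permutation-invariant if it is invariant under conjugation by the unitaries permuting the $n$ tensor factors. It is IID-$G$-invariant if $U_{\vec g}\rho U_{\vec g}^\dagger=\rho$ for all $\vec g=(g_1,\dots,g_n)\in G^n$, where $U_{\vec g}=\bigotimes_{i=1}^nU_{g_i}$. $\mathrm{Sym}^n(W)$ is the symmetric subspace of $W^{\otimes n}\subseteq(\mathbb{C}^{d_Ad_B}\otimes\mathbb{C}^{d_Ad_B})^{\otimes n}$; the purification traces out the second copy of $\mathbb{C}^{d_Ad_B}$ in each of the $n$ pairs. *)

From HB Require Import structures.
From mathcomp Require Import all_boot all_order all_algebra all_fingroup.
From mathcomp Require Import all_classical all_reals all_analysis.
From mathcomp Require Import complex.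
Import numFieldTopology.Exports.
Set Implicit Arguments. Unset Strict Implicit. Unset Printing Implicit Defensive.
Import Order.TTheory GRing.Theory Num.Theory.
Local Open Scope ring_scope.

Section Defs.
Variable R : realType.
Local Notation C := (R[i]).

Definition compact_group (G : topologicalType) (mul : G -> G -> G) (one : G)
  (inv : G -> G) : Prop :=
  [/\ (forall a b c, mul a (mul b c) = mul (mul a b) c),
      (forall a, mul one a = a /\ mul a one = a),
      (forall a, mul (inv a) a = one /\ mul a (inv a) = one),
      continuous (fun p : G * G => mul p.1 p.2) /\ continuous inv
    & compact [set: G] /\ hausdorff_space G].

Definition is_rep (G : Type) (mul : G -> G -> G) (one : G) (d : nat)
  (pi : G -> 'M[C]_d) : Prop :=
  (forall g h, pi (mul g h) = pi g *m pi h) /\ pi one = 1%:M.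

Definition adjmx (p q : nat) (A : 'M[C]_(p, q)) : 'M[C]_(q, p) :=
  map_mx (fun z => Num.conj z) A^T.

Definition unitary_rep (G : topologicalType) (mul : G -> G -> G) (one : G)
  (d : nat) (U : G -> 'M[C]_d) : Prop :=
  [/\ is_rep mul one U,
      (forall g, U g *m adjmx (U g) = 1%:M)
    & (forall i j, continuous (fun g => @complex.Re R (U g i j)) /\
                   continuous (fun g => @complex.Im R (U g i j)))].

(* Subspaces of C^d are encoded as row spaces S of mxalgebra (vectors written
   as rows); the column vector v^T is mapped by pi g to (v *m (pi g)^T)^T. *)
Definition irreducible_rep (G : Type) (d : nat) (pi : G -> 'M[C]_d) : Prop :=
  (0 < d)%N /\
  forall S : 'M[C]_d, (forall g, (S *m (pi g)^T <= S)%MS) ->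
    (S == (0 : 'M[C]_d))%MS \/ row_full S.

Definition rep_equiv (G : Type) (d1 d2 : nat) (pi1 : G -> 'M[C]_d1)
  (pi2 : G -> 'M[C]_d2) : Prop :=
  exists T : 'M[C]_(d1, d2),
    [/\ row_free T, row_full T & forall g, pi1 g *m T = T *m pi2 g].

(* U decomposes into k pairwise inequivalent irreducible representations
   pi_1..pi_k with multiplicities m_1..m_k:
   C^D = (+)_{i, a < m i} Im (E i a), a direct sum (P i a are the coordinate
   projections), each summand invariant and U restricted to it equivalent to pi i. *)
Definition decomposes (G : Type) (mul : G -> G -> G) (one : G) (D k : nat)
  (U : G -> 'M[C]_D) (m : 'I_k -> nat) : Prop :=
  (forall i, 0 < m i)%N /\
  exists (d : 'I_k -> nat) (pi : forall i, G -> 'M[C]_(d i)),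
    [/\ (forall i, is_rep mul one (pi i)),
        (forall i, irreducible_rep (pi i)),
        (forall i j, i != j -> ~ rep_equiv (pi i) (pi j))
      & exists (E : forall i, 'I_(m i) -> 'M[C]_(D, d i))
               (P : forall i, 'I_(m i) -> 'M[C]_(d i, D)),
          [/\ (forall i a g, U g *m E i a = E i a *m pi i g),
              (forall i a, P i a *m E i a = 1%:M),
              (forall i a i' a', (i != i') || (val a != val a') ->
                   P i a *m E i' a' = 0)
            & \sum_(i < k) \sum_(a < m i) E i a *m P i a = 1%:M]].

(* Computational basis of (C^D)^{(x)n}: functions 'I_n -> 'I_D. *)
Definition tidx (D n : nat) := {ffun 'I_n -> 'I_D}.
Definition op (D n : nat) := tidx D n -> tidx D n -> C.

Definition opmul (D n : nat) (A B : op D n) : op D n :=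
  fun x y => \sum_(z : tidx D n) A x z * B z y.
Definition opadj (D n : nat) (A : op D n) : op D n :=
  fun x y => Num.conj (A y x).

(* U_{g_1} (x) ... (x) U_{g_n} *)
Definition tensor_op (D n : nat) (V : 'I_n -> 'M[C]_D) : op D n :=
  fun x y => \prod_(i < n) V i (x i) (y i).

Definition perm_op (D n : nat) (s : 'S_n) : op D n :=
  fun x y => (x == [ffun i => y ((s^-1)%g i)])%:R.

Definition conj_invariant (D n : nat) (A rho : op D n) : Prop :=
  forall x y, opmul (opmul A rho) (opadj A) x y = rho x y.

Definition perm_invariant (D n : nat) (rho : op D n) : Prop :=
  forall s : 'S_n, conj_invariant (@perm_op D n s) rho.

Definition iid_invariant (G : Type) (D n : nat) (U : G -> 'M[C]_D)
  (rho : op D n) : Prop :=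
  forall g : 'I_n -> G, conj_invariant (tensor_op (fun i => U (g i))) rho.

Definition psd (D n : nat) (rho : op D n) : Prop :=
  (forall x y, rho y x = Num.conj (rho x y)) /\
  forall v : tidx D n -> C,
    0 <= \sum_(x : tidx D n) \sum_(y : tidx D n) Num.conj (v x) * rho x y * v y.

(* basis of (C^D (x) C^D)^{(x)n}: for each of the n pairs, a pair of indices;
   the first component is the system, the second the purifying copy *)
Definition tidx2 (D n : nat) := {ffun 'I_n -> 'I_D * 'I_D}.
Definition pairff (D n : nat) (x z : tidx D n) : tidx2 D n :=
  [ffun i => (x i, z i)].

Definition purifies (D n : nat) (Psi : tidx2 D n -> C) (rho : op D n) : Prop :=
  forall x y : tidx D n,
    \sum_(z : tidx D n) Psi (pairff x z) * Num.conj (Psi (pairff y z)) = rho x y.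

Definition lin_indep (D r : nat) (w : 'I_r -> 'I_D * 'I_D -> C) : Prop :=
  forall c : 'I_r -> C, (forall p, \sum_(j < r) c j * w j p = 0) ->
    forall j, c j = 0.

Definition in_tensor_power (D n r : nat) (w : 'I_r -> 'I_D * 'I_D -> C)
  (Psi : tidx2 D n -> C) : Prop :=
  exists c : {ffun 'I_n -> 'I_r} -> C,
    forall x, Psi x = \sum_(a : {ffun 'I_n -> 'I_r}) c a * \prod_(i < n) w (a i) (x i).

Definition symmetric_vec (D n : nat) (Psi : tidx2 D n -> C) : Prop :=
  forall (s : 'S_n) (x : tidx2 D n), Psi [ffun i => x (s i)] = Psi x.

Definition in_sym_power (D n r : nat) (w : 'I_r -> 'I_D * 'I_D -> C)
  (Psi : tidx2 D n -> C) : Prop :=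
  in_tensor_power w Psi /\ symmetric_vec Psi.

End Defs.

(* Let S be the positive square root of rho and read it as the vector Psi(x, z) = S(x, z) on
   the n pairs (x_i, z_i); tracing out the z's gives S S^* = rho.  As a function of rho, S
   commutes with every operator commuting with rho.  The permutation unitaries make Psi
   symmetric.  The unitaries U_g acting on a single factor make every single-factor slice of
   S an element of the commutant of U, which by Schur's lemma is the span W of the
   sum_i m_i^2 independent operators E_(i,a) P_(i,b).  So the projection onto W acting on
   one factor fixes Psi, hence so does its n-th tensor power, and Psi lies in W^(x)n. *)

From HB Require Import structures.
From mathcomp Require Import all_boot all_order all_algebra all_fingroup.
From mathcomp Require Import all_classical all_reals all_analysis.
From mathcomp Require Import complex.
Import numFieldTopology.Exports.
Import Order.TTheory GRing.Theory Num.Theory.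
Local Open Scope ring_scope.
From mathcomp Require Import spectral sesquilinear.

Section Schur.
Context {R : realType} {G : Type}.
Local Notation C := R[i].

Lemma intertwiner_row_free_full {d1 d2 : nat} {p1 : G -> 'M[C]_d1} {p2 : G -> 'M[C]_d2}
    {T : 'M[C]_(d1, d2)} :
  irreducible_rep p1 -> irreducible_rep p2 ->
  (forall g, p1 g *m T = T *m p2 g) -> T != 0 -> row_free T /\ row_full T.
Proof.
move=> [_ irr1] [_ irr2] pT T0.
have pTt g : T^T *m (p1 g)^T = (p2 g)^T *m T^T by rewrite -!trmx_mul pT.
split.
- have im_inv : (<<T^T>> *m (p1 _)^T <= <<T^T>>)%MS.
    by move=> g; rewrite (eqmxMr _ (genmxE _)) genmxE pTt submxMl.
  case/irr1: im_inv => [/eqmx0P/eqP|].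
    by rewrite -mxrank_eq0 genmxE mxrank_eq0 trmx_eq0 (negbTE T0).
  by rewrite /row_full /row_free genmxE mxrank_tr.
- have ker_inv : (kermx T^T *m (p2 _)^T <= kermx T^T)%MS.
    by move=> g; rewrite sub_kermx -mulmxA -pTt mulmxA mulmx_ker mul0mx.
  case/irr2: ker_inv => [/eqmx0P/eqP|].
    by rewrite kermx_eq0 /row_free /row_full mxrank_tr.
  by rewrite -sub1mx sub_kermx mul1mx trmx_eq0 (negbTE T0).
Qed.

Lemma intertwiner_inequiv_eq0 {d1 d2 : nat} {p1 : G -> 'M[C]_d1} {p2 : G -> 'M[C]_d2}
    {T : 'M[C]_(d1, d2)} :
  irreducible_rep p1 -> irreducible_rep p2 -> ~ rep_equiv p1 p2 ->
  (forall g, p1 g *m T = T *m p2 g) -> T = 0.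
Proof.
move=> irr1 irr2 neq pT; apply/eqP; apply/negPn/negP => T0.
have [freeT fullT] := intertwiner_row_free_full irr1 irr2 pT T0.
by apply: neq; exists T.
Qed.

Lemma intertwiner_scalar {d : nat} {p : G -> 'M[C]_d} {T : 'M[C]_d} :
  irreducible_rep p -> (forall g, p g *m T = T *m p g) -> T = (\tr T / d%:R)%:M.
Proof.
move=> irr pT; have [d_gt0 _] := irr.
have [c c_eig] := eigenvalue_closed T d_gt0.
suff -> : T = c%:M.
  by rewrite mxtrace_scalar -[c *+ d]mulr_natr mulfK // pnatr_eq0 -lt0n.
apply/eqP; rewrite -subr_eq0; apply/negPn/negP => Tc0.
have pTc g : p g *m (T - c%:M) = (T - c%:M) *m p g.
  by rewrite mulmxBr mulmxBl pT scalar_mxC.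
have [freeTc _] := intertwiner_row_free_full irr irr pTc Tc0.
by move: c_eig; rewrite /eigenvalue /eigenspace kermx_eq0 freeTc.
Qed.
End Schur.

Section Commutant.
Context {R : realType} {G : Type}.
Local Notation C := R[i].
Context {D k : nat} {U : G -> 'M[C]_D} {m d : 'I_k -> nat} { pi : forall i, G -> 'M[C]_(d i) }.
Variables (E : forall i, 'I_(m i) -> 'M[C]_(D, d i)) (P : forall i, 'I_(m i) -> 'M[C]_(d i, D)).
Hypothesis pi_irr : forall i, irreducible_rep (pi i).
Hypothesis pi_inequiv : forall i j, i != j -> ~ rep_equiv (pi i) (pi j).
Hypothesis UE : forall i a g, U g *m E i a = E i a *m pi i g.
Hypothesis PE1 : forall i a, P i a *m E i a = 1%:M.
Hypothesis PE0 : forall i a i' a', (i != i') || (val a != val a') -> P i a *m E i' a' = 0.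
Hypothesis sum_EP : \sum_(i < k) \sum_(a < m i) E i a *m P i a = 1%:M.

Lemma sum_biorth {i : 'I_k} (a : 'I_(m i)) {q : nat}
    (F : forall i', 'I_(m i') -> 'M[C]_(d i', q)) :
  \sum_(i' < k) \sum_(b < m i') P i a *m E i' b *m F i' b = F i a.
Proof.
rewrite (bigD1 i) //= [X in _ + X]big1 ?addr0 => [|i' i'i]; last first.
  by apply: big1 => b _; rewrite PE0 ?mul0mx // eq_sym i'i.
rewrite (bigD1 a) //= [X in _ + X]big1 ?addr0 => [|b ba]; first by rewrite PE1 mul1mx.
by rewrite PE0 ?mul0mx // eq_sym ba orbT.
Qed.

Lemma P_intertwines i (a : 'I_(m i)) g : P i a *m U g = pi i g *m P i a.
Proof.
rewrite -[P i a *m U g]mulmx1 -sum_EP mulmx_sumr.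
rewrite -(sum_biorth a (fun i' b => pi i' g *m P i' b)).
apply: eq_bigr => i' _; rewrite mulmx_sumr; apply: eq_bigr => b _.
by rewrite !mulmxA -(mulmxA (P i a)) UE !mulmxA.
Qed.

Definition cidx := {i : 'I_k & ('I_(m i) * 'I_(m i))%type}.

Definition cbasis (t : cidx) : 'M[C]_D := E (tag t) (tagged t).1 *m P (tag t) (tagged t).2.

Definition ccoord (t : cidx) (Y : 'M[C]_D) : C :=
  \tr (P (tag t) (tagged t).1 *m Y *m E (tag t) (tagged t).2) / (d (tag t))%:R.

Lemma sum_cidx (V : nmodType) (F : forall i, 'I_(m i) -> 'I_(m i) -> V) :
  \sum_(t : cidx) F (tag t) (tagged t).1 (tagged t).2 =
  \sum_(i < k) \sum_(a < m i) \sum_(b < m i) F i a b.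
Proof.
transitivity (\sum_(i < k) \sum_(ab : 'I_(m i) * 'I_(m i)) F i ab.1 ab.2).
  by rewrite (sig_big_dep (fun _ => true) (fun _ _ => true) (fun i ab => F i ab.1 ab.2)).
by apply: eq_bigr => i _; rewrite pair_bigA.
Qed.

Lemma card_cidx : #|{: cidx}| = (\sum_(i < k) m i ^ 2)%N.
Proof.
rewrite -sum1_card (sum_cidx _ (fun _ _ _ => 1%N)); apply: eq_bigr => i _.
by rewrite sum_nat_const card_ord sum_nat_const card_ord muln1 -mulnn.
Qed.

Lemma commutant_decomp (Y : 'M[C]_D) : (forall g, U g *m Y = Y *m U g) ->
  Y = \sum_(t : cidx) ccoord t Y *: cbasis t.
Proof.
move=> UY.
have PYE_intertwines i (a : 'I_(m i)) i' (b : 'I_(m i')) g :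
    pi i g *m (P i a *m Y *m E i' b) = (P i a *m Y *m E i' b) *m pi i' g.
  rewrite !mulmxA -P_intertwines -(mulmxA _ (U g)) UY !mulmxA.
  by rewrite -!(mulmxA _ _ (E i' b)) UE !mulmxA.
transitivity (\sum_(i < k) \sum_(a < m i) \sum_(i' < k) \sum_(b < m i')
    E i a *m (P i a *m Y *m E i' b) *m P i' b).
  rewrite -[LHS]mul1mx -[LHS]mulmx1 -sum_EP !mulmx_suml; apply: eq_bigr => i _.
  rewrite !mulmx_suml; apply: eq_bigr => a _; rewrite mulmx_sumr; apply: eq_bigr => i' _.
  by rewrite mulmx_sumr; apply: eq_bigr => b _; rewrite !mulmxA.
rewrite /ccoord /cbasis.
rewrite (sum_cidx _ (fun i a b => \tr (P i a *m Y *m E i b) / (d i)%:R *: (E i a *m P i b))).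
(* By Schur's lemma the block P_(i,a) Y E_(i',b) vanishes for i != i' and is scalar for i = i'. *)
apply: eq_bigr => i _; apply: eq_bigr => a _.
rewrite (bigD1 i) //= [X in _ + X]big1 ?addr0 => [|i' i'i]; last first.
  have neq : ~ rep_equiv (pi i) (pi i') by apply: pi_inequiv; rewrite eq_sym.
  apply: big1 => b _.
  have := intertwiner_inequiv_eq0 (pi_irr i) (pi_irr i') neq (PYE_intertwines i a i' b).
  by move->; rewrite mulmx0 mul0mx.
apply: eq_bigr => b _.
rewrite {1}(intertwiner_scalar (pi_irr i) (PYE_intertwines i a i b)).
by rewrite mul_mx_scalar -scalemxAl.
Qed.

Lemma cbasis_biorth (t t' : cidx) :
  P (tag t) (tagged t).1 *m cbasis t' *m E (tag t) (tagged t).2 = (t == t')%:R%:M.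
Proof.
case: t t' => [i [a b]] [i' [a' b']]; rewrite /cbasis /= !mulmxA -mulmxA.
case: (eqVneq i i') => [eq_ii'|ii']; last first.
  have -> : (Tagged _ (a, b) == Tagged _ (a', b') :> cidx) = false.
    by apply: contraNF ii' => /eqP/(congr1 tag) /= ->.
  by rewrite PE0 ?ii' // mul0mx raddf0.
subst i'; rewrite eq_Tagged /= xpair_eqE.
case: (eqVneq a a') => [<-|aa']; last first.
  by rewrite PE0 ?mul0mx ?raddf0 //; apply/orP; right.
case: (eqVneq b' b) => [->|b'b]; last first.
  by rewrite [P i b' *m _]PE0 ?mulmx0 ?raddf0 //; apply/orP; right.
by rewrite !PE1 mulmx1.
Qed.

Lemma cbasis_free (c : cidx -> C) : \sum_(t : cidx) c t *: cbasis t = 0 -> forall t, c t = 0.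
Proof.
move=> c0 t; have [d_gt0 _] := pi_irr (tag t).
have /matrixP/(_ (Ordinal d_gt0) (Ordinal d_gt0)) :=
  congr1 (fun Z => P (tag t) (tagged t).1 *m Z *m E (tag t) (tagged t).2) c0.
rewrite mulmx0 mul0mx mulmx_sumr mulmx_suml.
under eq_bigr => t' _ do rewrite -scalemxAr -scalemxAl cbasis_biorth.
rewrite (bigD1 t) //= big1 ?addr0 => [|t' t't]; last first.
  by rewrite eq_sym (negbTE t't) raddf0 scaler0.
by rewrite eqxx !mxE eqxx mulr1.
Qed.

Local Notation r := (\sum_(i < k) m i ^ 2)%N.

Definition cenum (j : 'I_r) : cidx := enum_val (cast_ord (esym card_cidx) j).

Lemma cenum_bij : bijective cenum.
Proof.
exists (fun t => cast_ord card_cidx (enum_rank t)) => [j|t].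
  by rewrite enum_valK cast_ordKV.
by rewrite /cenum cast_ordK enum_rankK.
Qed.

Definition cvec (j : 'I_r) (s : 'I_D * 'I_D) : C := cbasis (cenum j) s.1 s.2.

Definition cdual (j : 'I_r) (s : 'I_D * 'I_D) : C :=
  let t := cenum j in
  (E (tag t) (tagged t).2 *m P (tag t) (tagged t).1) s.2 s.1 / (d (tag t))%:R.

Lemma ccoord_cenum j Y : ccoord (cenum j) Y = \sum_s cdual j s * Y s.1 s.2.
Proof.
rewrite /ccoord /cdual mxtrace_mulC mulmxA /mxtrace mulr_suml.
rewrite -(pair_bigA _ (fun p q => _ q p / _ * Y p q)) exchange_big /=.
apply: eq_bigr => q _; rewrite mxE mulr_suml; apply: eq_bigr => p _.
by rewrite mulrAC.
Qed.

Lemma commutant_expand (Y : 'M[C]_D) : (forall g, U g *m Y = Y *m U g) ->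
  forall s, Y s.1 s.2 = \sum_j cvec j s * \sum_t cdual j t * Y t.1 t.2.
Proof.
move=> /commutant_decomp YE s; rewrite {1}YE summxE (reindex cenum) /=; last first.
  exact: onW_bij cenum_bij.
by apply: eq_bigr => j _; rewrite mxE ccoord_cenum mulrC.
Qed.

Lemma cvec_free : lin_indep cvec.
Proof.
move=> c c0 j; have [cenum_inv cenumK cenum_invK] := cenum_bij.
have := cbasis_free (fun t => c (cenum_inv t)) _ (cenum j); rewrite cenumK; apply.
apply/matrixP => p q; rewrite summxE mxE (reindex cenum) /=; last exact: onW_bij cenum_bij.
by rewrite -[RHS](c0 (p, q)); apply: eq_bigr => j' _; rewrite mxE cenumK.
Qed.
End Commutant.

Section KernelAlgebra.
Context {K : comPzRingType} {T : finType}.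

Definition kmul (A B : T -> T -> K) : T -> T -> K := fun x y => \sum_z A x z * B z y.
Definition kdelta : T -> T -> K := fun x y => (x == y)%:R.
Definition kapp (A : T -> T -> K) (f : T -> K) : T -> K := fun x => \sum_y A x y * f y.

Lemma eq_kmull {A A' : T -> T -> K} B : A =2 A' -> kmul A B =2 kmul A' B.
Proof. by move=> AA' x y; apply: eq_bigr => z _; rewrite AA'. Qed.

Lemma eq_kmulr {B B' : T -> T -> K} A : B =2 B' -> kmul A B =2 kmul A B'.
Proof. by move=> BB' x y; apply: eq_bigr => z _; rewrite BB'. Qed.

Lemma kmul_deltar A : kmul A kdelta =2 A.
Proof.
move=> x y; rewrite /kmul (bigD1 y) //= big1 ?addr0 /kdelta ?eqxx ?mulr1 // => z zy.
by rewrite (negbTE zy) mulr0.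
Qed.

Lemma kmul_deltal A : kmul kdelta A =2 A.
Proof.
move=> x y; rewrite /kmul (bigD1 x) //= big1 ?addr0 /kdelta ?eqxx ?mul1r // => z zx.
by rewrite eq_sym (negbTE zx) mul0r.
Qed.

Lemma kapp_delta f : kapp kdelta f =1 f.
Proof.
move=> x; rewrite /kapp (bigD1 x) //= big1 ?addr0 /kdelta ?eqxx ?mul1r // => y yx.
by rewrite eq_sym (negbTE yx) mul0r.
Qed.

Lemma kapp_mul A B f : kapp (kmul A B) f =1 kapp A (kapp B f).
Proof.
move=> x; rewrite /kapp /kmul; under eq_bigr => y _ do rewrite mulr_suml.
rewrite exchange_big /=; apply: eq_bigr => z _.
by rewrite mulr_sumr; apply: eq_bigr => y _; rewrite mulrA.
Qed.
End KernelAlgebra.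

Section TensorKernels.
Context {K : comPzRingType} {T : finType} {n : nat}.
Local Notation X := {ffun 'I_n -> T}.

Definition upd (x : X) (l : 'I_n) (t : T) : X := [ffun i => if i == l then t else x i].

Lemma upd_id (x : X) l : upd x l (x l) = x.
Proof. by apply/ffunP => i; rewrite ffunE; case: eqP => // ->. Qed.

Lemma upd_at (x : X) l t : upd x l t l = t.
Proof. by rewrite ffunE eqxx. Qed.

Lemma upd_upd (x : X) l t u : upd (upd x l t) l u = upd x l u.
Proof. by apply/ffunP => i; rewrite !ffunE; case: eqP. Qed.

Definition tens (V : 'I_n -> T -> T -> K) : X -> X -> K :=
  fun x y => \prod_i V i (x i) (y i).

Definition factor_op (l : 'I_n) (W : T -> T -> K) : X -> X -> K :=
  tens (fun i => if i == l then W else kdelta).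

Lemma kmul_tens V W : kmul (tens V) (tens W) =2 tens (fun i => kmul (V i) (W i)).
Proof.
move=> x y; rewrite /kmul /tens bigA_distr_bigA /=.
by apply: eq_bigr => z _; rewrite -big_split.
Qed.

Lemma tens_delta : tens (fun _ => kdelta) =2 kdelta.
Proof.
move=> x y; rewrite /tens /kdelta; have [->|xy] := eqVneq x y.
  by apply: big1 => i _; rewrite eqxx.
have [i xiyi] : exists i, x i != y i.
  apply/existsP; apply: contraR xy => /existsPn xy.
  by apply/eqP/ffunP => i; move/negPn/eqP: (xy i).
by rewrite (bigD1 i) //= (negbTE xiyi) mul0r.
Qed.

Lemma kapp_factor_op l W f x : kapp (factor_op l W) f x = \sum_t W (x l) t * f (upd x l t).
Proof.
rewrite /kapp (partition_big (fun y : X => y l) predT) //=; apply: eq_bigr => t _.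
rewrite (bigD1 (upd x l t)) /= ?upd_at // big1 ?addr0 => [|y /andP[/eqP ylt yxt]].
  congr (_ * _); rewrite /factor_op /tens (bigD1 l) //= eqxx upd_at big1 ?mulr1 // => i il.
  by rewrite (negbTE il) ffunE (negbTE il) /kdelta eqxx.
have [i /andP[il xiyi]] : exists i, (i != l) && (x i != y i).
  apply/existsP; apply: contraR yxt => /existsPn xy; apply/eqP/ffunP => i.
  rewrite ffunE; case: eqP => [->|/eqP il]; first by rewrite ylt.
  by move: (xy i); rewrite il /= negbK => /eqP.
by rewrite /factor_op /tens (bigD1 i) //= (negbTE il) /kdelta (negbTE xiyi) !mul0r.
Qed.

Lemma factor_op_tr l W x y : factor_op l W x y = factor_op l (fun a b => W b a) y x.
Proof. by apply: eq_bigr => i _; case: (i == l); rewrite // /kdelta eq_sym. Qed.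

Lemma kmul_factor_opl l W B x y :
  kmul (factor_op l W) B x y = \sum_t W (x l) t * B (upd x l t) y.
Proof. exact: (kapp_factor_op l W (B ^~ y)). Qed.

Lemma kmul_factor_opr l W A x y :
  kmul A (factor_op l W) x y = \sum_t A x (upd y l t) * W t (y l).
Proof.
transitivity (kapp (factor_op l (fun a b => W b a)) (A x) y).
  by apply: eq_bigr => z _; rewrite factor_op_tr mulrC.
by rewrite kapp_factor_op; apply: eq_bigr => t _; rewrite mulrC.
Qed.

Lemma tens_fix (Q : T -> T -> K) (f : X -> K) :
  (forall l, kapp (factor_op l Q) f =1 f) -> kapp (tens (fun _ => Q)) f =1 f.
Proof.
move=> Qf; pose Qm m := tens (fun i : 'I_n => if (i < m)%N then Q else kdelta).
suff Qmf m : (m <= n)%N -> kapp (Qm m) f =1 f.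
  move=> x; rewrite -(Qmf n (leqnn n) x); apply: eq_bigr => y _.
  by congr (_ * _); apply: eq_bigr => i _; rewrite ltn_ord.
elim: m => [_ x|m IHm lt_mn x].
  rewrite -(kapp_delta f x); apply: eq_bigr => y _; congr (_ * _).
  by rewrite -tens_delta.
pose l := Ordinal lt_mn.
have QmS : Qm m.+1 =2 kmul (Qm m) (factor_op l Q).
  move=> x' y'; rewrite kmul_tens; apply: eq_bigr => i _.
  case: (ltngtP i m) => [im|mi|im].
  - by rewrite ltnS ltnW // ifN ?kmul_deltar // -val_eqE /= neq_ltn im.
  - by rewrite ltnS leqNgt mi /= ifN ?kmul_deltal // -val_eqE /= neq_ltn mi orbT.
  - by rewrite (_ : i == l) ?kmul_deltal ?im ?ltnSn //; apply/eqP/val_inj.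
transitivity (kapp (kmul (Qm m) (factor_op l Q)) f x).
  by apply: eq_bigr => y _; rewrite QmS.
rewrite kapp_mul -[RHS](IHm (ltnW lt_mn) x); apply: eq_bigr => y _.
by rewrite Qf.
Qed.

Lemma tensor_power_span r (w u : 'I_r -> T -> K) (f : X -> K) :
  (forall l x, f x = \sum_j w j (x l) * \sum_t u j t * f (upd x l t)) ->
  exists c : {ffun 'I_n -> 'I_r} -> K, forall x, f x = \sum_a c a * \prod_i w (a i) (x i).
Proof.
(* Q = sum_j w_j (x) u_j fixes f in every factor, hence so does its n-th tensor power. *)
move=> wuf; pose Q s t := \sum_j w j s * u j t.
have Qf : kapp (tens (fun _ => Q)) f =1 f.
  apply: tens_fix => l x; rewrite kapp_factor_op [RHS](wuf l x).
  under eq_bigr => t _ do rewrite mulr_suml.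
  rewrite exchange_big /=; apply: eq_bigr => j _.
  by rewrite mulr_sumr; apply: eq_bigr => t _; rewrite mulrA.
exists (fun a => \sum_(y : X) (\prod_i u (a i) (y i)) * f y) => x.
rewrite -Qf /kapp /tens.
under eq_bigr => y _ do rewrite bigA_distr_bigA /= mulr_suml.
rewrite exchange_big /=; apply: eq_bigr => a _.
rewrite mulr_suml; apply: eq_bigr => y _.
by rewrite big_split /= [RHS]mulrC mulrA.
Qed.
End TensorKernels.

Section Slices.
Context {K : comPzRingType} {D n : nat}.
Local Notation X := {ffun 'I_n -> 'I_D}.

Definition slice (S : X -> X -> K) (l : 'I_n) (x z : X) : 'M[K]_D :=
  \matrix_(p, q) S (upd x l p) (upd z l q).

Lemma slice_comm (W : 'M[K]_D) S l :
  kmul (factor_op l W) S =2 kmul S (factor_op l W) ->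
  forall x z, W *m slice S l x z = slice S l x z *m W.
Proof.
move=> WS x z; apply/matrixP => p q; have := WS (upd x l p) (upd z l q).
rewrite kmul_factor_opl kmul_factor_opr !upd_at !mxE => WSpq.
transitivity (\sum_t W p t * S (upd (upd x l p) l t) (upd z l q)).
  by apply: eq_bigr => t _; rewrite !mxE upd_upd.
rewrite WSpq; apply: eq_bigr => t _.
by rewrite !mxE upd_upd.
Qed.
End Slices.

Lemma comm_diag_mx_map {F : idomainType} {n : nat} (f : F -> F)
    (B : 'M[F]_n) (lam : 'rV[F]_n) :
  B *m diag_mx lam = diag_mx lam *m B ->
  B *m diag_mx (map_mx f lam) = diag_mx (map_mx f lam) *m B.
Proof.
move=> /matrixP Blam; apply/matrixP => j l; move: (Blam j l).
rewrite !mul_mx_diag !mul_diag_mx !mxE.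
have [->|Bjl_neq0] := eqVneq (B j l) 0; first by rewrite !mulr0 !mul0r.
by rewrite [RHS]mulrC => /(mulfI Bjl_neq0) ->; rewrite mulrC.
Qed.

Section PsdSqrt.
Context {C : numClosedFieldType}.
Local Open Scope sesquilinear_scope.

Lemma unitarymx_conj_comm n (Q A V : 'M[C]_n) : Q \is unitarymx ->
  (V *m (Q^t* *m A *m Q) == (Q^t* *m A *m Q) *m V) =
  (Q *m V *m Q^t* *m A == A *m (Q *m V *m Q^t*)).
Proof.
move=> /unitarymxP QQt; have QtQ := mulmx1C QQt.
have conj_inj : injective (fun X : 'M[C]_n => Q^t* *m X *m Q).
  move=> X Y /(congr1 (fun Z => Q *m Z *m Q^t*)) /=.
  by rewrite !mulmxA QQt !mul1mx -!mulmxA QQt !mulmx1.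
rewrite -[RHS](inj_eq conj_inj) /= !mulmxA QtQ mul1mx.
by rewrite -[_ *m Q^t* *m Q]mulmxA QtQ mulmx1.
Qed.

Lemma psd_sqrt_comm N (M : 'M[C]_N) : M^t* = M ->
  (forall v : 'rV_N, 0 <= (v *m M *m v^t*) 0 0) ->
  exists S : 'M[C]_N, S *m S^t* = M /\ forall V, V *m M = M *m V -> V *m S = S *m V.
Proof.
(* Conjugating by Q, an operator commuting with M = Q^* diag(lam) Q commutes with diag(lam),
   hence with diag(sqrt lam). *)
move=> M_herm M_psd.
set Q := spectralmx M; set lam := spectral_diag M.
have QU : Q \is unitarymx := spectral_unitarymx M.
have QQt : Q *m Q^t* = 1%:M by apply/unitarymxP.
have ME : M = Q^t* *m diag_mx lam *m Q.
  by rewrite -invmx_unitary //; apply/orthomx_spectralP; rewrite qualifE /= M_herm.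
have lam_ge0 j : 0 <= lam 0 j.
  have := M_psd (row j Q); congr (0 <= _).
  transitivity ((Q *m M *m Q^t*) j j).
    rewrite !mxE; apply: eq_bigr => l _; rewrite !mxE; congr (_ * _).
    by apply: eq_bigr => l' _; rewrite !mxE.
  by rewrite ME !mulmxA QQt mul1mx -mulmxA QQt mulmx1 mxE eqxx mulr1n.
pose sq := map_mx sqrtC lam.
have sqrt_real j : sqrtC (lam 0 j) \is Num.real by rewrite ger0_real // sqrtC_ge0 lam_ge0.
exists (Q^t* *m diag_mx sq *m Q); split.
  rewrite !trmx_mul !map_mxM trmxCK tr_diag_mx map_diag_mx.
  rewrite !mulmxA -(mulmxA _ Q) QQt mulmx1 -(mulmxA _ (diag_mx sq)) mulmx_diag ME.
  congr (_ *m diag_mx _ *m _); apply/rowP => j; rewrite !mxE.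
  by rewrite -[X in _ * X]/(sqrtC (lam 0 j))^* conj_Creal // -expr2 sqrtCK.
move=> V VM; apply/eqP; rewrite unitarymx_conj_comm //; apply/eqP/comm_diag_mx_map.
by apply/eqP; rewrite -unitarymx_conj_comm // -ME VM.
Qed.
End PsdSqrt.

Section KernelMatrices.
Context {C : numClosedFieldType} {T : finType}.
Local Open Scope sesquilinear_scope.
Local Notation N := #|T|.

Definition kadj (A : T -> T -> C) : T -> T -> C := fun x y => (A y x)^*.

Definition mxk (A : T -> T -> C) : 'M[C]_N := \matrix_(i, j) A (enum_val i) (enum_val j).

Lemma sum_enum_val (F : T -> C) : \sum_z F z = \sum_(i < N) F (enum_val i).
Proof.
rewrite (reindex (@enum_val T predT)) //.
by exists enum_rank => x _; rewrite ?enum_valK ?enum_rankK.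
Qed.

Lemma mxk_mul A B : mxk (kmul A B) = mxk A *m mxk B.
Proof.
apply/matrixP => i j; rewrite !mxE /kmul sum_enum_val.
by apply: eq_bigr => l _; rewrite !mxE.
Qed.

Lemma mxk_adj A : mxk (kadj A) = (mxk A)^t*.
Proof. by apply/matrixP => i j; rewrite !mxE. Qed.

Lemma mxk_delta : mxk kdelta = 1%:M.
Proof. by apply/matrixP => i j; rewrite !mxE /kdelta (inj_eq enum_val_inj). Qed.

Lemma mxk_eq A B : mxk A = mxk B <-> A =2 B.
Proof.
split=> [/matrixP AB x y | AB]; last by apply/matrixP => i j; rewrite !mxE AB.
by have := AB (enum_rank x) (enum_rank y); rewrite !mxE !enum_rankK.
Qed.

Lemma mxk_surj (M : 'M[C]_N) : mxk (fun x y => M (enum_rank x) (enum_rank y)) = M.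
Proof. by apply/matrixP => i j; rewrite !mxE !enum_valK. Qed.

Lemma unitary_conj_comm (V A : T -> T -> C) :
  kmul V (kadj V) =2 kdelta -> kmul (kmul V A) (kadj V) =2 A -> kmul V A =2 kmul A V.
Proof.
rewrite -!mxk_eq !mxk_mul mxk_adj mxk_delta => VVt VAVt.
by rewrite -[in RHS]VAVt -mulmxA (mulmx1C VVt) mulmx1.
Qed.

Lemma psd_kernel_sqrt (A : T -> T -> C) : (forall x y, A y x = (A x y)^*) ->
  (forall u : T -> C, 0 <= \sum_x \sum_y (u x)^* * A x y * u y) ->
  exists S, kmul S (kadj S) =2 A /\ forall V, kmul V A =2 kmul A V -> kmul V S =2 kmul S V.
Proof.
move=> A_herm A_psd.
have [||M [MMt M_comm]] := @psd_sqrt_comm C N (mxk A).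
- by apply/matrixP => i j; rewrite !mxE A_herm conjCK.
- move=> v; have := A_psd (fun x => (v 0 (enum_rank x))^*).
  congr (0 <= _); rewrite sum_enum_val exchange_big mxE /= sum_enum_val.
  apply: eq_bigr => j _; rewrite !mxE mulr_suml; apply: eq_bigr => i _.
  by rewrite !mxE !enum_valK conjCK.
exists (fun x y => M (enum_rank x) (enum_rank y)); split.
  by apply/mxk_eq; rewrite mxk_mul mxk_adj mxk_surj.
by move=> V /mxk_eq; rewrite -mxk_eq !mxk_mul mxk_surj => /M_comm.
Qed.
End KernelMatrices.

Section TensorPowerOperators.
Context {R : realType} {D n : nat}.
Local Notation C := R[i].
Local Notation X := (tidx D n).

Definition pcomp (x : X) (s : 'S_n) : X := [ffun i => x (s i)].

Lemma pcomp_inj s : injective (pcomp ^~ s).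
Proof.
move=> x y /ffunP xy; apply/ffunP => i; have := xy (s^-1 i)%g.
by rewrite !ffunE permKV.
Qed.

Lemma perm_opE (s : 'S_n) (x y : X) : perm_op R s x y = (y == pcomp x s)%:R.
Proof.
rewrite /perm_op; suff -> : (x == [ffun i => y ((s^-1)%g i)]) = (y == pcomp x s) by [].
by apply/eqP/eqP => ->; apply/ffunP => i; rewrite !ffunE ?permK ?permKV.
Qed.

Lemma perm_op_unitary (s : 'S_n) :
  kmul (@perm_op R D n s) (kadj (@perm_op R D n s)) =2 kdelta.
Proof.
move=> x y; rewrite /kmul /kadj (bigD1 (pcomp x s)) //= big1 ?addr0 => [|z zx].
  by rewrite !perm_opE eqxx mul1r (inj_eq (@pcomp_inj s)) conjC_nat.
by rewrite perm_opE (negbTE zx) mul0r.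
Qed.

Lemma perm_comm_invariant (S : X -> X -> C) s :
  kmul (@perm_op R D n s) S =2 kmul S (@perm_op R D n s) ->
  forall x y, S (pcomp x s) (pcomp y s) = S x y.
Proof.
move=> sS x y; have := sS x (pcomp y s).
rewrite /kmul (bigD1 (pcomp x s)) //= big1 ?addr0 => [|z zx]; last first.
  by rewrite perm_opE (negbTE zx) mul0r.
rewrite (bigD1 y) //= [X in _ = _ + X]big1 ?addr0 => [|z zy]; last first.
  by rewrite perm_opE (inj_eq (@pcomp_inj s)) eq_sym (negbTE zy) mulr0.
by rewrite !perm_opE !eqxx mul1r mulr1.
Qed.

Lemma tensor_op_unitary (V : 'I_n -> 'M[C]_D) :
  (forall i, V i *m adjmx (V i) = 1%:M) ->
  kmul (tensor_op V) (kadj (tensor_op V)) =2 kdelta.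
Proof.
move=> V_unitary x y; rewrite -tens_delta.
transitivity (kmul (tens (fun i => V i)) (tens (fun i => kadj (V i))) x y).
  by apply: eq_bigr => z _; rewrite /kadj /tensor_op rmorph_prod.
rewrite kmul_tens; apply: eq_bigr => i _.
have /matrixP/(_ (x i) (y i)) := V_unitary i; rewrite !mxE /kdelta => <-.
by apply: eq_bigr => t _; rewrite !mxE.
Qed.

Lemma tensor_op_factor (W : 'M[C]_D) (l : 'I_n) :
  tensor_op (fun i => if i == l then W else 1%:M) =2 factor_op l W.
Proof. by move=> x y; apply: eq_bigr => i _; case: (i == l); rewrite ?mxE. Qed.

Definition tfst (y : tidx2 D n) : X := [ffun i => (y i).1].
Definition tsnd (y : tidx2 D n) : X := [ffun i => (y i).2].
Definition kvec (S : X -> X -> C) (y : tidx2 D n) : C := S (tfst y) (tsnd y).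

Lemma kvec_pair S x z : kvec S (pairff x z) = S x z.
Proof. by congr S; apply/ffunP => i; rewrite !ffunE. Qed.

Lemma kvec_sym S :
  (forall s x y, S (pcomp x s) (pcomp y s) = S x y) -> symmetric_vec (kvec S).
Proof.
move=> S_sym s y; rewrite /kvec -[RHS](S_sym s).
by congr S; apply/ffunP => i; rewrite !ffunE.
Qed.

Lemma kvec_in_tensor_power S r (w u : 'I_r -> 'I_D * 'I_D -> C) :
  (forall l x z s,
     slice S l x z s.1 s.2 = \sum_j w j s * \sum_t u j t * slice S l x z t.1 t.2) ->
  in_tensor_power w (kvec S).
Proof.
move=> S_span; apply: tensor_power_span => l y.
have kvec_upd t : kvec S (upd y l t) = slice S l (tfst y) (tsnd y) t.1 t.2.
  by rewrite mxE; congr S; apply/ffunP => i; rewrite !ffunE; case: (i == l).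
rewrite -[in LHS](upd_id y l) kvec_upd S_span.
by apply: eq_bigr => j _; congr (_ * _); apply: eq_bigr => t _; rewrite kvec_upd.
Qed.
End TensorPowerOperators.

Theorem lemma2 (R : realType) (G : topologicalType) (mul : G -> G -> G)
  (one : G) (inv : G -> G) (dA dB : nat) (U : G -> 'M[R[i]]_(dA * dB))
  (k : nat) (m : 'I_k -> nat) (n : nat) (rho : op R (dA * dB) n) :
  compact_group mul one inv ->
  unitary_rep mul one U ->
  decomposes mul one U m ->
  psd rho -> perm_invariant rho -> iid_invariant U rho ->
  exists (w : 'I_(\sum_(i < k) m i ^ 2) -> 'I_(dA * dB) * 'I_(dA * dB) -> R[i])
         (Psi : tidx2 (dA * dB) n -> R[i]),
    [/\ lin_indep w, in_sym_power w Psi & purifies Psi rho].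
Proof.
(* Compactness and continuity only serve to produce the decomposition, which is assumed. *)
move=> _ [[_ U1] U_unitary _] [_ [d [pi [_ pi_irr pi_inequiv [E [P [UE PE1 PE0 sum_EP]]]]]]].
move=> [rho_herm rho_psd] rho_perm rho_iid.
have [S [SSt S_comm]] := psd_kernel_sqrt rho rho_herm rho_psd.
have S_factor l g : kmul (factor_op l (U g)) S =2 kmul S (factor_op l (U g)).
  have UgE : tensor_op (fun i => U (if i == l then g else one)) =2 factor_op l (U g).
    move=> x y; rewrite -tensor_op_factor.
    by apply: eq_bigr => i _; case: (i == l); rewrite ?U1.
  move=> x y; rewrite -(eq_kmull S UgE) -(eq_kmulr S UgE); apply: S_comm.
  by apply: unitary_conj_comm (rho_iid _); apply: tensor_op_unitary.
exists (cvec E P), (kvec S); split.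
- exact: cvec_free E P pi_irr PE1 PE0.
- split; last first.
    apply: kvec_sym => s; apply: perm_comm_invariant; apply: S_comm.
    exact: unitary_conj_comm (perm_op_unitary s) (rho_perm s).
  apply: kvec_in_tensor_power => l x z.
  apply: (commutant_expand E P pi_irr pi_inequiv UE PE1 PE0 sum_EP) => g.
  exact: slice_comm (S_factor l g) x z.
- by move=> x y; rewrite -SSt; apply: eq_bigr => z _; rewrite !kvec_pair.
Qed.
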